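(* Let $\langle E,\rightarrow\rangle$ be a computation, $b$ a regular predicate, and $C$ a non-trivial consistent cut of $\langle E,\rightarrow\rangle$. Then $C$ satisfies $\neg b$ if and only if there exist events $e,f$ such that there is no path from $e$ to $f$ in $\langle E,\rightarrow\rangle$, there is a path from $e$ to $f$ in the slice of $\langle E,\rightarrow\rangle$ with respect to $b$, and $C$ satisfies $\mathrm{prevents}(f,e)$ (i.e., $f\in C$ and $e\notin C$).
   Context: A computation is a directed graph $\langle E, \rightarrow\rangle$ whose vertices (events) are partitioned among processes, each with an initial and a final event, whose path relation contains Lamport's happened-before relation, with all initial (resp. final) events in one strongly connected component. A vertex subset $C$ is a consistent cut if for every edge $(u,v)$, $v\in C$ implies $u\in C$; $\emptyset$ and $E$ are trivial. A predicate is evaluated on non-trivial consistent cuts and is regular if whenever consistent cuts $C_1,C_2$ satisfy it, so do $C_1\cap C_2$ and $C_1\cup C_2$. The slice with respect to $b$ is a directed graph on $E$ whose consistent cuts include every consistent cut of the computation satisfying $b$ and which has the fewest consistent cuts among all such graphs. *)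

From mathcomp Require Import all_boot.

Set Implicit Arguments. Unset Strict Implicit. Unset Printing Implicit Defensive.

Section Defs.
Variable E : finType.

Definition reach (g : rel E) (x y : E) : bool := [exists z, g x z && connect g z y].

Definition consistent_cut (g : rel E) (C : {set E}) : Prop :=
  forall u v, g u v -> v \in C -> u \in C.

Definition nontrivial_cut (g : rel E) (C : {set E}) : Prop :=
  consistent_cut g C /\ C != set0 /\ C != setT.

(* A computation <E, g>: events partitioned among processes (proc), each process
   totally ordered by the process order [pord] with initial event [init p] and
   final event [final p]; messages [msg]; Lamport's happened-before is the
   transitive closure of process order and messages; the path relation of g
   contains happened-before; all initial (resp. final) events lie in one
   strongly connected component of g. *)
Definition is_computation (P : finType) (proc : E -> P) (pord msg : rel E)
    (init final : P -> E) (g : rel E) : Prop :=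
  (forall x, ~~ pord x x) /\
      (forall x y z, pord x y -> pord y z -> pord x z) /\
      (forall x y, pord x y -> proc x = proc y) /\
      (forall x y, proc x = proc y -> x != y -> pord x y || pord y x) /\
      (forall p, proc (init p) = p /\ proc (final p) = p) /\
      (forall p e, proc e = p -> e != init p -> pord (init p) e) /\
      (forall p e, proc e = p -> e != final p -> pord e (final p)) /\
      (forall x y, reach (fun u v => pord u v || msg u v) x y -> reach g x y) /\
      (forall p q, connect g (init p) (init q) /\ connect g (final p) (final q)).

Definition regular (g : rel E) (b : {set E} -> bool) : Prop :=
  forall C1 C2, nontrivial_cut g C1 -> nontrivial_cut g C2 -> b C1 -> b C2 ->
    b (C1 :&: C2) /\ b (C1 :|: C2).

Definition cuts_of (g : rel E) : {set {set E}} :=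
  [set C : {set E} | [forall u, forall v, g u v ==> (v \in C) ==> (u \in C)]].

Definition is_slice (g : rel E) (b : {set E} -> bool) (S : rel E) : Prop :=
  (forall C, nontrivial_cut g C -> b C -> consistent_cut S C) /\
  (forall S' : rel E, (forall C, nontrivial_cut g C -> b C -> consistent_cut S' C) ->
     #|cuts_of S| <= #|cuts_of S'|).

End Defs.

From mathcomp Require Import all_boot.

Set Implicit Arguments. Unset Strict Implicit. Unset Printing Implicit Defensive.

(* By regularity, the nonempty proper consistent cuts satisfying b (the
   b-cuts, [sat_cut]) together with the two trivial cuts form a lattice of
   sets.  Let u -> v ([slice_rel]) mean that every b-cut containing v contains
   u.  Every cut of this relation is the union of the sets J(v)
   ([slice_closure v]), the least b-cut containing v or E if there is none,
   hence a b-cut or trivial.  Every candidate slice has each J(v) among its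
   cuts, so it has at least the cuts of this relation; by minimality, every
   nonempty proper cut of the slice satisfies b.  So a cut C violating b is
   crossed backwards by some slice edge e -> f, which is no path of the
   computation as C is consistent there; conversely such an edge shows that
   C is not a cut of the slice, so C cannot satisfy b. *)

Section ConsistentCuts.
Variable E : finType.
Implicit Types (g : rel E) (X Y : {set E}).

Lemma consistent_cutP g X : reflect (consistent_cut g X) (X \in cuts_of g).
Proof.
rewrite inE; apply: (iffP forallP) => [cut_g u v guv vX | cut_g u].
  by move/forallP/(_ v): (cut_g u); rewrite guv vX.
by apply/forallP => v; apply/implyP => guv; apply/implyP; apply: cut_g.
Qed.

Lemma consistent_cut_connect g X u v :
  consistent_cut g X -> connect g u v -> v \in X -> u \in X.
Proof.
move=> cut_g /connectP [p + ->]; elim: p u => [|w p IHp] u //= /andP [guw pw].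
by move=> vX; apply: cut_g guw (IHp _ pw vX).
Qed.

Lemma consistent_cut_reach g X u v :
  consistent_cut g X -> reach g u v -> v \in X -> u \in X.
Proof.
move=> cut_g /existsP [w /andP [guw cwv]] vX.
exact: cut_g guw (consistent_cut_connect cut_g cwv vX).
Qed.

Lemma consistent_cutI g X Y :
  consistent_cut g X -> consistent_cut g Y -> consistent_cut g (X :&: Y).
Proof.
move=> cutX cutY u v guv /setIP [vX vY].
by rewrite inE (cutX _ _ guv vX) (cutY _ _ guv vY).
Qed.

Lemma consistent_cutU g X Y :
  consistent_cut g X -> consistent_cut g Y -> consistent_cut g (X :|: Y).
Proof.
move=> cutX cutY u v guv /setUP [vX | vY]; rewrite inE.
  by rewrite (cutX _ _ guv vX).
by rewrite (cutY _ _ guv vY) orbT.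
Qed.

End ConsistentCuts.

Section LeastSlice.
Variables (E : finType) (g : rel E) (b : {set E} -> bool).
Implicit Types (S : rel E) (X Y : {set E}).

Definition sat_cut X := [&& X \in cuts_of g, X != set0, X != setT & b X].

Lemma sat_cutP X : reflect (nontrivial_cut g X /\ b X) (sat_cut X).
Proof.
by apply: (iffP and4P) => [[/consistent_cutP ? ? ? ?] | [[/consistent_cutP ? [? ?]] ?]].
Qed.

Definition sat_or_trivial X := [|| X == set0, X == setT | sat_cut X].

Hypothesis regb : regular g b.

Lemma sat_or_trivialI X Y :
  sat_or_trivial X -> sat_or_trivial Y -> sat_or_trivial (X :&: Y).
Proof.
case/or3P=> [/eqP-> | /eqP-> | satX]; first by rewrite set0I /sat_or_trivial eqxx.
  by rewrite setTI.
case/or3P=> [/eqP-> | /eqP-> | satY]; first by rewrite setI0 /sat_or_trivial eqxx.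
  by rewrite setIT /sat_or_trivial satX !orbT.
move: satX satY => /sat_cutP [ntX bX] /sat_cutP [ntY bY].
have [bXY _] := regb ntX ntY bX bY.
have [[cutX [_ XT]] [cutY _]] := (ntX, ntY).
have [-> | XY0] := eqVneq (X :&: Y) set0; first by rewrite /sat_or_trivial eqxx.
have XYT : X :&: Y != setT.
  by apply: contraNneq XT => XYT; rewrite eqEsubset subsetT -XYT subsetIl.
apply/or3P; apply: Or33; apply/sat_cutP; split=> //; split=> //.
exact: consistent_cutI.
Qed.

Lemma sat_or_trivialU X Y :
  sat_or_trivial X -> sat_or_trivial Y -> sat_or_trivial (X :|: Y).
Proof.
case/or3P=> [/eqP-> | /eqP-> | satX]; first by rewrite set0U.
  by rewrite setTU /sat_or_trivial eqxx orbT.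
case/or3P=> [/eqP-> | /eqP-> | satY].
- by rewrite setU0 /sat_or_trivial satX !orbT.
- by rewrite setUT /sat_or_trivial eqxx orbT.
move: satX satY => /sat_cutP [ntX bX] /sat_cutP [ntY bY].
have [_ bXY] := regb ntX ntY bX bY.
have [[cutX [X0 _]] [cutY _]] := (ntX, ntY).
have [-> | XYT] := eqVneq (X :|: Y) setT; first by rewrite /sat_or_trivial eqxx orbT.
have XY0 : X :|: Y != set0.
  by apply: contraNneq X0 => XY0; rewrite -subset0 -XY0 subsetUl.
apply/or3P; apply: Or33; apply/sat_cutP; split=> //; split=> //.
exact: consistent_cutU.
Qed.

Definition slice_rel : rel E :=
  fun u v => [forall D, sat_cut D ==> (v \in D) ==> (u \in D)].

Definition slice_closure v : {set E} := \bigcap_(D | sat_cut D && (v \in D)) D.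

Lemma mem_slice_closure v : v \in slice_closure v.
Proof. by apply/bigcapP => D /andP []. Qed.

Lemma slice_closure_sub X v :
  consistent_cut slice_rel X -> v \in X -> slice_closure v \subset X.
Proof.
move=> cutX vX; apply/subsetP => u /bigcapP u_closure; apply: cutX vX.
by apply/forallP => D; apply/implyP => satD; apply/implyP => vD; apply: u_closure;
  rewrite satD vD.
Qed.

Lemma slice_closure_cut S v :
  (forall X, nontrivial_cut g X -> b X -> consistent_cut S X) ->
  consistent_cut S (slice_closure v).
Proof.
move=> sat_cut_S u w Suw /bigcapP w_closure; apply/bigcapP => D /andP [satD vD].
have wD : w \in D by apply: w_closure; rewrite satD vD.
by move/sat_cutP: satD => [ntD bD]; apply: sat_cut_S ntD bD _ _ Suw wD.
Qed.

Lemma slice_closure_sat v : sat_or_trivial (slice_closure v).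
Proof.
apply: (big_ind sat_or_trivial); first by rewrite /sat_or_trivial eqxx orbT.
  exact: sat_or_trivialI.
by move=> D /andP [satD _]; rewrite /sat_or_trivial satD !orbT.
Qed.

Lemma sat_cut_slice_rel X : sat_cut X -> consistent_cut slice_rel X.
Proof. by move=> satX u v /forallP/(_ X); rewrite satX /= => /implyP. Qed.

Lemma slice_rel_cut_sat X : consistent_cut slice_rel X -> sat_or_trivial X.
Proof.
move=> cutX.
have -> : X = \bigcup_(v in X) slice_closure v.
  apply/setP => u; apply/idP/bigcupP => [uX | [v vX]].
    by exists u => //; apply: mem_slice_closure.
  exact: subsetP (slice_closure_sub cutX vX) u.
apply: (big_ind sat_or_trivial); first by rewrite /sat_or_trivial eqxx.
  exact: sat_or_trivialU.
by move=> v _; apply: slice_closure_sat.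
Qed.

Lemma slice_rel_cuts_sub S :
  (forall X, nontrivial_cut g X -> b X -> consistent_cut S X) ->
  cuts_of slice_rel \subset cuts_of S.
Proof.
move=> sat_cut_S; apply/subsetP => X /consistent_cutP cutX.
apply/consistent_cutP => u v Suv vX.
have u_closure := slice_closure_cut sat_cut_S Suv (mem_slice_closure v).
exact: subsetP (slice_closure_sub cutX vX) u u_closure.
Qed.

Lemma slice_cut_sat S X :
  is_slice g b S -> consistent_cut S X -> X != set0 -> X != setT -> b X.
Proof.
move=> [sat_cut_S min_S] cutX X0 XT; apply/negPn/negP => nbX.
have slice_rel_sat X' : nontrivial_cut g X' -> b X' -> consistent_cut slice_rel X'.
  by move=> ntX' bX'; apply/sat_cut_slice_rel/sat_cutP.
have : cuts_of slice_rel \proper cuts_of S.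
  rewrite properE slice_rel_cuts_sub //=; apply/subsetPn; exists X.
    exact/consistent_cutP.
  apply/consistent_cutP => /slice_rel_cut_sat.
  by rewrite /sat_or_trivial (negbTE X0) (negbTE XT) /sat_cut (negbTE nbX) !andbF.
by move/proper_card; rewrite ltnNge (min_S _ slice_rel_sat).
Qed.

End LeastSlice.

Theorem theorem16 (E P : finType) (proc : E -> P) (pord msg : rel E)
    (init final : P -> E) (g : rel E) (b : {set E} -> bool) (S : rel E)
    (C : {set E}) :
  is_computation proc pord msg init final g ->
  regular g b ->
  is_slice g b S ->
  nontrivial_cut g C ->
  (~~ b C <->
   exists e f : E, ~~ reach g e f /\ reach S e f /\ f \in C /\ e \notin C).
Proof.
(* Only regularity of b and minimality of the slice matter, not the
   structure of the computation. *)
move=> _ regb sliceS ntC; have [cutC [C0 CT]] := ntC.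
split=> [nbC | [e [f [_ [Sef [fC eC]]]]]]; last first.
  apply/negP => bC; move: eC.
  by rewrite (consistent_cut_reach (sliceS.1 C ntC bC) Sef fC).
have : C \notin cuts_of S.
  move: nbC; apply: contra => /consistent_cutP cutS.
  exact: (slice_cut_sat regb sliceS cutS C0 CT).
rewrite inE => /forallPn [e /forallPn [f]]; rewrite !negb_imply => /and3P [Sef fC eC].
exists e, f; split; last by split=> //; apply/existsP; exists f; rewrite Sef connect0.
by move: eC; apply: contra => reach_ef; apply: consistent_cut_reach cutC reach_ef fC.
Qed.
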